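(* Let $X\sim p_X$ and $Y\sim p_Y$ be continuous random variables and let $q_{X;m},q_{Y;m}$ be the densities of $\widetilde X_m,\widetilde Y_m$. Then for all $m\in(0,\infty)$, $$\int_{\mathbb R}|q_{X;m}(x)-q_{Y;m}(x)|\,dx\le\int_{\mathbb R}|p_X(x)-p_Y(x)|\,dx .$$ Moreover, for any $\alpha\in(0,\infty)$ and $m\ge4$, if $\mathbb E|X|^\alpha$ exists (is finite), then $$\Pr\big(|X|>\tfrac1{\sqrt m}\big)\,e^{-2\alpha/\sqrt m}\,\mathbb E|X|^\alpha\le\mathbb E|\widetilde X_m|^\alpha\le\Big(\frac2{\sqrt m}\Big)^\alpha+e^{\alpha/\sqrt m}\,\mathbb E|X|^\alpha .$$
   Context: For $m>0$, $[X]_m=\frac1m\lfloor\frac12+mX\rfloor$ with pmf $P_{X;m}[i]=\Pr([X]_m=i/m)=\int_{[(i-0.5)/m,(i+0.5)/m)}p_X$. $\widetilde X_m$ denotes a continuous random variable with density $q_{X;m}(x)=m\,P_{X;m}[i]$ for $x\in[(i-0.5)/m,(i+0.5)/m)$, $i\in\mathbb Z$; similarly $\widetilde Y_m\sim q_{Y;m}$. *)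

From HB Require Import structures.
From mathcomp Require Import all_boot all_order all_algebra.
From mathcomp Require Import all_classical all_reals all_analysis.
Set Implicit Arguments. Unset Strict Implicit. Unset Printing Implicit Defensive.
Import Order.TTheory GRing.Theory Num.Theory.
Local Open Scope classical_set_scope.
Local Open Scope ring_scope.

(* A probability density on R (w.r.t. Lebesgue measure): the law of a
   continuous random variable X ~ p. *)
Definition is_density (R : realType) (p : R -> R) : Prop :=
  [/\ (forall x, 0 <= p x), measurable_fun setT p &
      (\int[lebesgue_measure]_x (p x)%:E = 1)%E].

Definition qpmf (R : realType) (p : R -> R) (m : R) (i : int) : \bar R :=
  (\int[lebesgue_measure]_(x in `[((i%:~R - 2^-1) / m)%R, ((i%:~R + 2^-1) / m)%R[)
      (p x)%:E)%E.

Definition qidx (R : realType) (m x : R) : int := Num.floor (2^-1 + m * x).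

Definition qdens (R : realType) (p : R -> R) (m : R) (x : R) : \bar R :=
  (m%:E * qpmf p m (qidx m x))%E.

From HB Require Import structures.
From mathcomp Require Import all_boot all_order all_algebra.
From mathcomp Require Import all_classical all_reals all_analysis.
From mathcomp Require Import measurable_realfun.
From mathcomp Require Import ring lra.
Import Order.TTheory GRing.Theory Num.Theory.
Local Open Scope classical_set_scope.
Local Open Scope ring_scope.

(* The quantized density [qdens p m] is the conditional expectation of [p] with
   respect to the partition of R into the cells [(i - 1/2)/m, (i + 1/2)/m).
   Hence it is an L^1 contraction, and by Fubini it can be moved across the
   moment integral: E|X~|^a = int p(x) * (average of |y|^a over the cell of x).
   Two points of a cell are less than 1/m = w^2 apart, w = 1/sqrt m, so this
   average is at most (2w)^a + e^(a w) |x|^a, and at least e^(-2 a w) |x|^a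
   when |x| > w.  The lower bound then follows from the association inequality
   Pr(|X| > w) E|X|^a <= E[|X|^a; |X| > w]. *)

Lemma ler_powR2r {R : realType} {a u v : R} :
  0 <= a -> 0 <= u -> u <= v -> u `^ a <= v `^ a.
Proof.
move=> a0 u0 uv; apply: (ge0_ler_powR a0) => //; rewrite nnegrE //.
exact: le_trans uv.
Qed.

Lemma invsqrt_bounds {R : realType} {m : R} : 4 <= m ->
  [/\ 0 < (Num.sqrt m)^-1, 2 * (Num.sqrt m)^-1 <= 1 &
      m^-1 = (Num.sqrt m)^-1 * (Num.sqrt m)^-1].
Proof.
move=> m4.
have s2 : 2 <= Num.sqrt m.
  have -> : (2 : R) = Num.sqrt (2 ^+ 2) by rewrite sqrtr_sqr ger0_norm.
  by rewrite ler_sqrt //; lra.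
split; first by rewrite invr_gt0; lra.
  by rewrite -ler_pdivlMl // mulr1 lef_pV2 ?posrE //; lra.
by rewrite -invfM -expr2 sqr_sqrtr //; lra.
Qed.

(* Either |x| <= w, and then |y| <= 2w, or |y| <= |x| (1 + w) <= |x| e^w. *)
Lemma powR_norm_le_near (R : realType) (a w x y : R) :
  0 < a -> 0 < w -> 2 * w <= 1 -> `|x - y| < w * w ->
  `|y| `^ a <= (2 * w) `^ a + expR (a * w) * `|x| `^ a.
Proof.
move=> a_gt0 w_gt0 w_le_half xy_near.
have hy : `|y| <= `|x| + w * w by have := lerB_dist y x; rewrite distrC; lra.
have x0 := normr_ge0 x; have y0 := normr_ge0 y.
have [x_small|x_large] := leP `|x| w.
  have hy2 : `|y| <= 2 * w by nra.
  apply: (le_trans (ler_powR2r (ltW a_gt0) y0 hy2)).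
  by rewrite lerDl mulr_ge0 ?powR_ge0 // ltW // expR_gt0.
have hyx : `|y| <= `|x| * (1 + w).
  have : w * w <= `|x| * w by rewrite ler_wpM2r // ?ltW.
  lra.
apply: (le_trans (ler_powR2r (ltW a_gt0) y0 hyx)).
rewrite [leLHS]powRM //; last by lra.
apply: (@le_trans _ _ (expR (a * w) * `|x| `^ a)); last by rewrite lerDr powR_ge0.
rewrite mulrC ler_wpM2r ?powR_ge0 // mulrC expRM.
apply: ler_powR2r; [exact: ltW | lra |].
by have := expR_ge1Dx w; lra.
Qed.

(* Here |y| >= |x| (1 - w) and 1 - w >= e^(-2w) for w <= 1/2. *)
Lemma powR_norm_ge_near (R : realType) (a w x y : R) :
  0 < a -> 0 < w -> 2 * w <= 1 -> `|x - y| < w * w -> w < `|x| ->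
  expR (- (2 * a) * w) * `|x| `^ a <= `|y| `^ a.
Proof.
move=> a_gt0 w_gt0 w_le_half xy_near x_large.
have hy : `|x| - w * w <= `|y| by have := lerB_dist x y; lra.
have x0 := normr_ge0 x.
have hxy : `|x| * (1 - w) <= `|y| by nra.
have exp_le : expR (- (2 * w)) <= 1 - w.
  rewrite expRN.
  apply: (@le_trans _ _ ((1 + 2 * w)^-1)).
    by rewrite lef_pV2 ?posrE ?expR_gt0 ?expR_ge1Dx //; lra.
  rewrite -[X in X <= _]mul1r ler_pdivrMr; nra.
apply: le_trans (ler_powR2r (ltW a_gt0) _ hxy); last by apply: mulr_ge0; lra.
rewrite [leRHS]powRM //; last by lra.
rewrite mulrC ler_wpM2l ?powR_ge0 //.
rewrite (_ : - (2 * a) * w = - (2 * w) * a); last by ring.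
by rewrite expRM; apply: ler_powR2r => //; exact: ltW.
Qed.

Section cell_average.
Variables (R : realType) (m : R).
Hypothesis m_gt0 : 0 < m.
Local Notation mu := (@lebesgue_measure R).

Definition cell (i : int) : set R := [set x | qidx m x = i].

Lemma itv_cellE i : [set` `[((i%:~R - 2^-1) / m), ((i%:~R + 2^-1) / m)[] = cell i.
Proof.
apply/seteqP; split => x /=; rewrite in_itv /= /cell /qidx.
  move=> /andP[lo hi]; apply/eqP; rewrite floor_eq intrD.
  rewrite ler_pdivrMr // in lo; rewrite ltr_pdivlMr // in hi.
  apply/andP; split; lra.
move/eqP; rewrite floor_eq intrD => /andP[lo hi].
rewrite ler_pdivrMr // ltr_pdivlMr //; apply/andP; split; lra.
Qed.

Lemma measurable_cell i : measurable (cell i).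
Proof. by rewrite -itv_cellE; exact: measurable_itv. Qed.

Lemma lebesgue_measure_cell i : mu (cell i) = (m^-1)%:E.
Proof.
rewrite -itv_cellE lebesgue_measure_itv /= lte_fin ltr_pM2r ?invr_gt0 //.
rewrite ifT; last by rewrite ltrD2l gtrN.
by rewrite -EFinD; congr EFin; field; rewrite gt_eqF.
Qed.

Lemma dist_lt_same_cell x y : qidx m y = qidx m x -> `|x - y| < m^-1.
Proof.
move=> xy.
have : cell (qidx m x) x by [].
have : cell (qidx m x) y by [].
rewrite -itv_cellE /= !in_itv /= !ler_pdivrMr // !ltr_pdivlMr //.
move=> /andP[y1 y2] /andP[x1 x2].
rewrite ltr_norml; apply/andP; split.
  by rewrite -(ltr_pM2r m_gt0) mulNr mulVf ?gt_eqF //; lra.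
by rewrite -(ltr_pM2r m_gt0) mulVf ?gt_eqF //; lra.
Qed.

(* Indicator of "x and y lie in the same cell": the kernel through which
   [cell_avg] becomes a double integral amenable to Fubini. *)
Definition same_cell (z : R * R) : \bar R :=
  (\1_[set z : R * R | qidx m z.1 = qidx m z.2] z : R)%:E.

Lemma measurable_same_cell : measurable_fun setT same_cell.
Proof.
apply/measurable_EFinP; apply: measurable_indic.
rewrite (_ : [set z | _] = \bigcup_(i : int) (cell i `*` cell i)).
  by apply: countable_bigcupT_measurable => // i; apply: measurableX; exact: measurable_cell.
apply/seteqP; split => [[x y]|[x y]] /=; first by move=> xy; exists (qidx m x).
by move=> [i _ [/= -> ->]].
Qed.

Lemma same_cell_ge0 z : (0 <= same_cell z)%E.
Proof. by rewrite lee_fin indicE. Qed.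

Lemma same_cellC x y : same_cell (x, y) = same_cell (y, x).
Proof.
rewrite /same_cell !indicE; congr (_%:R%:E); congr nat_of_bool.
by apply/idP/idP => /set_mem /= xy; apply/mem_set; rewrite /= xy.
Qed.

Lemma integral_same_cell (f : R -> \bar R) x :
  (\int[mu]_y (f y * same_cell (x, y)) = \int[mu]_(y in cell (qidx m x)) f y)%E.
Proof.
rewrite [RHS]integral_mkcond epatch_indic; apply: eq_integral => y _.
rewrite /same_cell !indicE; congr (_ * _%:R%:E)%E; congr nat_of_bool.
by apply/idP/idP => /set_mem /= xy; apply/mem_set; rewrite /cell /= xy.
Qed.

Definition cell_avg (f : R -> \bar R) (x : R) : \bar R :=
  (m%:E * \int[mu]_(y in cell (qidx m x)) f y)%E.

Lemma qdensE (p : R -> R) : qdens p m = cell_avg (EFin \o p).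
Proof. by apply/funext => x; rewrite /qdens /qpmf itv_cellE. Qed.

Lemma cell_avg_kernel (f : R -> \bar R) x :
  cell_avg f x = (m%:E * \int[mu]_y (f y * same_cell (x, y)))%E.
Proof. by rewrite integral_same_cell. Qed.

Section nonnegative.
Variable f : R -> \bar R.
Hypotheses (mf : measurable_fun setT f) (f_ge0 : forall x, (0 <= f x)%E).

Lemma measurable_slice x : measurable_fun setT (fun y => f y * same_cell (x, y))%E.
Proof. by apply: emeasurable_funM => //; exact: measurable_fun_pair2 measurable_same_cell. Qed.

Lemma cell_avg_ge0 x : (0 <= cell_avg f x)%E.
Proof. by rewrite mule_ge0 // ?lee_fin ?(ltW m_gt0) //; apply: integral_ge0. Qed.

Lemma measurable_cell_avg : measurable_fun setT (cell_avg f).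
Proof.
rewrite (_ : cell_avg f = fun x => m%:E * \int[mu]_y (f y * same_cell (x, y)))%E.
  apply: measurable_funeM.
  apply: (@measurable_fun_fubini_tonelli_F _ _ _ _ _ mu (fun z => f z.2 * same_cell z)%E).
    exact: emeasurable_funM (measurableT_comp mf measurable_snd) measurable_same_cell.
  by move=> z; rewrite mule_ge0 ?same_cell_ge0.
by apply/funext => x; rewrite cell_avg_kernel.
Qed.

Lemma cell_avg_le x (B : R) : (forall y, qidx m y = qidx m x -> (f y <= B%:E)%E) ->
  (cell_avg f x <= B%:E)%E.
Proof.
move=> fB; rewrite /cell_avg.
have -> : B%:E = (m%:E * (B%:E * mu (cell (qidx m x))))%E.
  by rewrite lebesgue_measure_cell -!EFinM mulrCA mulfV ?mulr1 // gt_eqF.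
apply: lee_wpmul2l; first by rewrite lee_fin ltW.
rewrite -integral_cst; last exact: measurable_cell.
by apply: ge0_le_integral => //; [exact: measurable_cell | exact: measurable_funS mf].
Qed.

End nonnegative.

Lemma measurable_qdens (p : R -> R) : measurable_fun setT p -> (forall x, 0 <= p x) ->
  measurable_fun setT (qdens p m).
Proof.
move=> mp p0; rewrite qdensE.
by apply: measurable_cell_avg => [|x]; [exact/measurable_EFinP | rewrite lee_fin].
Qed.

Lemma cell_avg_ge (f : R -> \bar R) x (B : R) : measurable_fun setT f -> 0 <= B ->
  (forall y, qidx m y = qidx m x -> (B%:E <= f y)%E) -> (B%:E <= cell_avg f x)%E.
Proof.
move=> mf B0 Bf; rewrite /cell_avg.
have -> : B%:E = (m%:E * (B%:E * mu (cell (qidx m x))))%E.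
  by rewrite lebesgue_measure_cell -!EFinM mulrCA mulfV ?mulr1 // gt_eqF.
apply: lee_wpmul2l; first by rewrite lee_fin ltW.
rewrite -integral_cst; last exact: measurable_cell.
by apply: ge0_le_integral => //; [exact: measurable_cell | exact: measurable_funS mf].
Qed.

Lemma cell_avg1 x : cell_avg (cst 1%E) x = 1%E.
Proof.
apply/eqP; rewrite eq_le; apply/andP; split.
  by apply: cell_avg_le => //; exact: measurable_cst.
by apply: cell_avg_ge => //; exact: measurable_cst.
Qed.

Lemma integral_mul_cell_avgC (f g : R -> \bar R) :
  measurable_fun setT f -> (forall x, (0 <= f x)%E) ->
  measurable_fun setT g -> (forall x, (0 <= g x)%E) ->
  (\int[mu]_x (f x * cell_avg g x) = \int[mu]_y (g y * cell_avg f y))%E.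
Proof.
move=> mf f0 mg g0.
have m0 : (0 <= m%:E)%E by rewrite lee_fin ltW.
pose h z := (m%:E * (f z.1 * (g z.2 * same_cell z)))%E.
have mh : measurable_fun setT h.
  apply: measurable_funeM; apply: emeasurable_funM.
    exact: measurableT_comp mf measurable_fst.
  exact: emeasurable_funM (measurableT_comp mg measurable_snd) measurable_same_cell.
have h0 z : (0 <= h z)%E by rewrite !mule_ge0 ?same_cell_ge0.
transitivity (\int[mu]_x \int[mu]_y h (x, y))%E.
  apply: eq_integral => x _; rewrite cell_avg_kernel muleA (muleC (f x)).
  rewrite -ge0_integralZl //.
  - by apply: eq_integral => y _; rewrite /h -!muleA.
  - exact: measurable_slice.
  - by move=> y _; rewrite mule_ge0 ?same_cell_ge0.
  - by rewrite mule_ge0.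
rewrite fubini_tonelli //; apply: eq_integral => y _.
rewrite cell_avg_kernel muleA (muleC (g y)).
rewrite -ge0_integralZl //.
- by apply: eq_integral => x _; rewrite /h same_cellC -!muleA /= (muleCA (f x)).
- exact: measurable_slice.
- by move=> x _; rewrite mule_ge0 ?same_cell_ge0.
- by rewrite mule_ge0.
Qed.

Lemma integral_cell_avg (f : R -> \bar R) :
  measurable_fun setT f -> (forall x, (0 <= f x)%E) ->
  (\int[mu]_x cell_avg f x = \int[mu]_x f x)%E.
Proof.
move=> mf f0.
transitivity (\int[mu]_x (cst 1%E x * cell_avg f x))%E.
  by apply: eq_integral => x _; rewrite mul1e.
rewrite integral_mul_cell_avgC //.
by apply: eq_integral => x _; rewrite cell_avg1 mule1.
Qed.

Lemma abse_cell_avgB (p q : R -> R) x :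
  mu.-integrable setT (EFin \o p) -> mu.-integrable setT (EFin \o q) ->
  (`|cell_avg (EFin \o p) x - cell_avg (EFin \o q) x|
     <= cell_avg (fun y => `|(p y)%:E - (q y)%:E|) x)%E.
Proof.
move=> ip iq; rewrite /cell_avg.
have mC := measurable_cell (qidx m x).
have ipC : mu.-integrable (cell (qidx m x)) (EFin \o p).
  by apply: (@integrableS _ _ _ mu setT).
have iqC : mu.-integrable (cell (qidx m x)) (EFin \o q).
  by apply: (@integrableS _ _ _ mu setT).
rewrite -muleBr //; last first.
  by apply: fin_num_adde_defl; rewrite fin_numN; exact: integrable_fin_num iqC.
rewrite -integralB // abseM gee0_abs ?lee_fin ?(ltW m_gt0) //.
apply: lee_wpmul2l; first by rewrite lee_fin ltW.
apply: le_abse_integral => //; apply: emeasurable_funB.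
  exact: measurable_int ipC.
exact: measurable_int iqC.
Qed.

End cell_average.

(* Two-cell Chebyshev association inequality: [a], [b] are the masses and [u],
   [v] the moments above and below the threshold [s]. *)
Lemma mass_mul_sum_le (R : realType) (a b u v : \bar R) (s : R) :
  a \is a fin_num -> b \is a fin_num -> u \is a fin_num -> v \is a fin_num ->
  (0 <= a)%E -> (0 <= b)%E -> 0 <= s ->
  (a + b = 1)%E -> (v <= s%:E * b)%E -> (s%:E * a <= u)%E -> (a * (u + v) <= u)%E.
Proof.
move: a b u v => [a| |] [b| |] [u| |] [v| |] //= _ _ _ _.
move=> a0 b0 s0 [ab1] vb au; rewrite !lee_fin in a0 b0.
rewrite -!EFinM !lee_fin in vb au; rewrite -EFinD -EFinM lee_fin.
have : a * v <= a * (s * b) by rewrite ler_wpM2l.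
have : b * (s * a) <= b * u by rewrite ler_wpM2l.
nra.
Qed.

Lemma tail_mass_mul_integral_le d (T : measurableType d) (R : realType)
    (mu : {measure set T -> \bar R}) (p F : T -> R) (A : set T) (t : R) :
  measurable A -> measurable_fun setT p -> measurable_fun setT F ->
  (forall x, 0 <= p x) -> (forall x, 0 <= F x) -> 0 <= t ->
  (\int[mu]_x (p x)%:E = 1)%E -> (\int[mu]_x (F x * p x)%:E < +oo)%E ->
  (forall x, A x -> t <= F x) -> (forall x, ~ A x -> F x <= t) ->
  (\int[mu]_(x in A) (p x)%:E * \int[mu]_x (F x * p x)%:E
     <= \int[mu]_(x in A) (F x * p x)%:E)%E.
Proof.
move=> mA mp mF p0 F0 t0 ip EFp_fin FA FAC.
have mAC : measurable (~` A) by exact: measurableC.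
have mpE : measurable_fun setT (EFin \o p) by exact/measurable_EFinP.
have mFpE : measurable_fun setT (fun x => (F x * p x)%:E).
  by apply/measurable_EFinP; exact: measurable_funM.
have integral_splitA (f : T -> \bar R) : measurable_fun setT f -> (forall x, 0 <= f x)%E ->
    (\int[mu]_x f x = \int[mu]_(x in A) f x + \int[mu]_(x in ~` A) f x)%E.
  move=> mf f0; rewrite -ge0_integral_setU ?setUCr //.
  by rewrite disj_set2E setICr.
set PA := (\int[mu]_(x in A) (p x)%:E)%E; set PC := (\int[mu]_(x in ~` A) (p x)%:E)%E.
set EA := (\int[mu]_(x in A) (F x * p x)%:E)%E.
set EC := (\int[mu]_(x in ~` A) (F x * p x)%:E)%E.
have PAC1 : (PA + PC = 1)%E by rewrite -ip integral_splitA // => x; rewrite lee_fin.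
have EAC : (\int[mu]_x (F x * p x)%:E = EA + EC)%E.
  by rewrite integral_splitA // => x; rewrite lee_fin mulr_ge0.
have PA0 : (0 <= PA)%E by apply: integral_ge0 => x _; rewrite lee_fin.
have PC0 : (0 <= PC)%E by apply: integral_ge0 => x _; rewrite lee_fin.
have EA0 : (0 <= EA)%E by apply: integral_ge0 => x _; rewrite lee_fin mulr_ge0.
have EC0 : (0 <= EC)%E by apply: integral_ge0 => x _; rewrite lee_fin mulr_ge0.
have fin_le (e b : \bar R) : (0 <= e)%E -> (e <= b)%E -> (b < +oo)%E -> e \is a fin_num.
  by move=> e0 eb b_fin; rewrite ge0_fin_numE // (le_lt_trans eb).
rewrite EAC; apply: (@mass_mul_sum_le _ PA PC EA EC t) => //.
- by apply: (fin_le _ _ PA0 (leeDl _ PC0)); rewrite PAC1 ltry.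
- by apply: (fin_le _ _ PC0 (leeDr _ PA0)); rewrite PAC1 ltry.
- by apply: (fin_le _ _ EA0 _ EFp_fin); rewrite EAC; exact: leeDl.
- by apply: (fin_le _ _ EC0 _ EFp_fin); rewrite EAC; exact: leeDr.
- rewrite /PC -(@ge0_integralZl_EFin _ _ _ mu) //; last 2 first.
  + by move=> x _; rewrite lee_fin.
  + exact: measurable_funS mpE.
  apply: ge0_le_integral => //.
  + by move=> x _; rewrite lee_fin mulr_ge0.
  + exact: measurable_funS mFpE.
  + by apply/measurable_EFinP; apply: measurable_funM => //; exact: measurable_funS mp.
  + by move=> x /FAC Fx; rewrite -EFinM lee_fin ler_wpM2r.
- rewrite /PA -(@ge0_integralZl_EFin _ _ _ mu) //; last 2 first.
  + by move=> x _; rewrite lee_fin.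
  + exact: measurable_funS mpE.
  apply: ge0_le_integral => //.
  + by move=> x _; rewrite lee_fin mulr_ge0.
  + by apply/measurable_EFinP; apply: measurable_funM => //; exact: measurable_funS mp.
  + exact: measurable_funS mFpE.
  + by move=> x /FA Fx; rewrite -EFinM lee_fin ler_wpM2r.
Qed.

Lemma integrable_density (R : realType) (p : R -> R) :
  is_density p -> (@lebesgue_measure R).-integrable setT (EFin \o p).
Proof.
move=> [p0 mp ip]; apply/integrableP; split; first exact/measurable_EFinP.
under eq_integral => x _ do rewrite /= ger0_norm //.
by rewrite ip ltry.
Qed.

Lemma l1_qdens_le (R : realType) (pX pY : R -> R) (m : R) :
  0 < m -> is_density pX -> is_density pY ->
  (\int[lebesgue_measure]_x `|qdens pX m x - qdens pY m x|
     <= \int[lebesgue_measure]_x `|(pX x)%:E - (pY x)%:E|)%E.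
Proof.
move=> m0 hX hY; have [pX0 mpX _] := hX; have [pY0 mpY _] := hY.
pose d x := `|(pX x)%:E - (pY x)%:E|%E.
have md : measurable_fun setT d.
  by apply: measurableT_comp => //; apply: emeasurable_funB; exact/measurable_EFinP.
have mqXY : measurable_fun setT (fun x => qdens pX m x - qdens pY m x)%E.
  by apply: emeasurable_funB; exact: measurable_qdens.
have d0 x : (0 <= d x)%E by exact: abse_ge0.
rewrite -(@integral_cell_avg _ m m0 d md d0).
apply: ge0_le_integral => //.
- exact: measurableT_comp mqXY.
- exact: (@measurable_cell_avg _ m m0 d md d0).
- move=> x _; rewrite !qdensE //.
  by apply: (@abse_cell_avgB _ m m0); exact: integrable_density.
Qed.

Lemma measurable_powR_norm (R : realType) (a : R) :
  measurable_fun setT (fun x : R => `|x| `^ a).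
Proof.
rewrite (_ : (fun x => _) = (@powR R ^~ a) \o Num.norm) //.
by apply: measurableT_comp; [exact: measurable_powR | exact: normr_measurable].
Qed.

Lemma moment_qdens_le (R : realType) (p : R -> R) (alpha m : R) :
  is_density p -> 0 < alpha -> 4 <= m ->
  (\int[lebesgue_measure]_x ((`|x| `^ alpha)%:E * qdens p m x) <=
   ((2 / Num.sqrt m) `^ alpha)%:E + (expR (alpha / Num.sqrt m))%:E *
     \int[lebesgue_measure]_x (`|x| `^ alpha * p x)%:E)%E.
Proof.
move=> [p0 mp ip] a0 m4; have [w0 w_half mw] := invsqrt_bounds m4.
have m0 : 0 < m by lra.
pose F (x : R) := (`|x| `^ alpha)%:E.
have mF : measurable_fun setT F by apply/measurable_EFinP; exact: measurable_powR_norm.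
have F0 x : (0 <= F x)%E by rewrite lee_fin powR_ge0.
have mpE : measurable_fun setT (EFin \o p) by exact/measurable_EFinP.
have pE0 x : (0 <= (EFin \o p) x)%E by rewrite lee_fin.
have mFp : measurable_fun setT (fun x : R => (`|x| `^ alpha * p x)%:E).
  by apply/measurable_EFinP; exact: measurable_funM (measurable_powR_norm _ alpha) mp.
rewrite qdensE // (@integral_mul_cell_avgC _ m m0 F (EFin \o p) mF F0 mpE pE0).
set c1 := (2 / Num.sqrt m) `^ alpha; set c2 := expR (alpha / Num.sqrt m).
have c10 : 0 <= c1 by exact: powR_ge0.
have c20 : 0 <= c2 by exact: ltW (expR_gt0 _).
apply: (@le_trans _ _ (\int[lebesgue_measure]_x
          (c1%:E * (p x)%:E + c2%:E * (`|x| `^ alpha * p x)%:E))%E).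
  apply: ge0_le_integral => //.
  - by move=> x _; rewrite mule_ge0 ?pE0 ?cell_avg_ge0.
  - exact: emeasurable_funM mpE (@measurable_cell_avg _ m m0 F mF F0).
  - by apply: emeasurable_funD; apply: measurable_funeM.
  move=> x _; rewrite -!EFinM -EFinD.
  rewrite (_ : c1 * p x + c2 * _ = p x * (c1 + c2 * `|x| `^ alpha)); last by ring.
  rewrite EFinM; apply: lee_wpmul2l; first by rewrite lee_fin.
  apply: (@cell_avg_le _ m m0 F mF F0) => y xy; rewrite lee_fin.
  by apply: powR_norm_le_near => //; rewrite -mw dist_lt_same_cell.
rewrite ge0_integralD //.
- rewrite (@ge0_integralZl_EFin _ _ _ lebesgue_measure setT measurableT (EFin \o p)) //.
  rewrite (@ge0_integralZl_EFin _ _ _ lebesgue_measure setT measurableT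
             (fun x => (`|x| `^ alpha * p x)%:E)) //.
  + by rewrite ip mule1.
  + by move=> x _; rewrite lee_fin mulr_ge0 ?powR_ge0.
- by move=> x _; rewrite mule_ge0 ?lee_fin.
- by apply: measurable_funeM; exact/measurable_EFinP.
- by move=> x _; rewrite mule_ge0 ?lee_fin ?mulr_ge0 ?powR_ge0.
- exact: measurable_funeM.
Qed.

Lemma measurable_norm_gt (R : realType) (r : R) : measurable [set x : R | r < `|x|].
Proof.
rewrite -[X in measurable X]setTI (_ : [set x | _] = (fun x => r < `|x|) @^-1` [set true]).
  by apply: measurable_fun_ltr => //; exact: normr_measurable.
by apply/seteqP; split => x /=.
Qed.

Lemma tail_moment_qdens_ge (R : realType) (p : R -> R) (alpha m : R) :
  is_density p -> 0 < alpha -> 4 <= m ->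
  ((expR (- (2 * alpha) / Num.sqrt m))%:E *
     \int[lebesgue_measure]_(x in [set x : R | (1 / Num.sqrt m < `|x|)%R])
        (`|x| `^ alpha * p x)%:E
   <= \int[lebesgue_measure]_x ((`|x| `^ alpha)%:E * qdens p m x))%E.
Proof.
move=> [p0 mp ip] a0 m4; have [w0 w_half mw] := invsqrt_bounds m4.
have m0 : 0 < m by lra.
set T := [set x : R | _].
have mT : measurable T by exact: measurable_norm_gt.
pose F (x : R) := (`|x| `^ alpha)%:E.
have mF : measurable_fun setT F by apply/measurable_EFinP; exact: measurable_powR_norm.
have F0 x : (0 <= F x)%E by rewrite lee_fin powR_ge0.
have mpE : measurable_fun setT (EFin \o p) by exact/measurable_EFinP.
have pE0 x : (0 <= (EFin \o p) x)%E by rewrite lee_fin.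
rewrite qdensE // (@integral_mul_cell_avgC _ m m0 F (EFin \o p) mF F0 mpE pE0).
set c := expR (- (2 * alpha) / Num.sqrt m).
have c0 : 0 <= c by exact: ltW (expR_gt0 _).
have mFpT : measurable_fun setT
    (fun x : R => (`|x| `^ alpha * p x)%:E * (EFin \o \1_T) x)%E.
  apply: emeasurable_funM; last exact/measurable_EFinP/measurable_indic.
  by apply/measurable_EFinP; exact: measurable_funM (measurable_powR_norm _ alpha) mp.
rewrite integral_mkcond epatch_indic -ge0_integralZl_EFin //; first last.
  by move=> x _ /=; rewrite mule_ge0 ?lee_fin ?indicE ?mulr_ge0 ?powR_ge0.
apply: ge0_le_integral => //.
- by move=> x _ /=; rewrite !mule_ge0 ?lee_fin ?indicE ?mulr_ge0 ?powR_ge0.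
- exact: measurable_funeM.
- exact: emeasurable_funM mpE (@measurable_cell_avg _ m m0 F mF F0).
move=> x _ /=; rewrite indicE; have [xT|xNT] := boolP (x \in T); last first.
  by rewrite /= !mule0 mule_ge0 ?lee_fin ?cell_avg_ge0.
rewrite /= mule1 -EFinM (_ : c * _ = p x * (c * `|x| `^ alpha)); last by ring.
rewrite EFinM; apply: lee_wpmul2l; first by rewrite lee_fin.
apply: (@cell_avg_ge _ m m0 F _ _ mF); first by rewrite mulr_ge0 ?powR_ge0.
move=> y xy; rewrite lee_fin; apply: powR_norm_ge_near => //.
  by rewrite -mw dist_lt_same_cell.
by move: xT; rewrite inE /T /= mul1r.
Qed.

Lemma moment_qdens_ge (R : realType) (p : R -> R) (alpha m : R) :
  is_density p -> 0 < alpha -> 4 <= m ->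
  (\int[lebesgue_measure]_x (`|x| `^ alpha * p x)%:E < +oo)%E ->
  (\int[lebesgue_measure]_(x in [set x : R | (1 / Num.sqrt m < `|x|)%R]) (p x)%:E *
     (expR (- (2 * alpha) / Num.sqrt m))%:E *
     \int[lebesgue_measure]_x (`|x| `^ alpha * p x)%:E
   <= \int[lebesgue_measure]_x ((`|x| `^ alpha)%:E * qdens p m x))%E.
Proof.
move=> hp a0 m4 EX_fin; have [p0 mp ip] := hp; have [w0 _ _] := invsqrt_bounds m4.
apply: le_trans (tail_moment_qdens_ge _ _ _ _ hp a0 m4).
rewrite muleAC muleC; apply: lee_wpmul2l; first by rewrite lee_fin ltW ?expR_gt0.
apply: (@tail_mass_mul_integral_le _ _ _ _ _ _ _ ((Num.sqrt m)^-1 `^ alpha)) => //.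
- exact: measurable_norm_gt.
- exact: measurable_powR_norm.
- move=> x; rewrite /= mul1r => /ltW wx.
  by apply: ler_powR2r => //; exact: ltW.
- move=> x; rewrite /= mul1r => /negP; rewrite -leNgt => xw.
  by apply: ler_powR2r => //; exact: ltW.
Qed.

Theorem mainTheorem12 (R : realType) (pX pY : R -> R) :
  is_density pX -> is_density pY ->
  (forall m : R, 0 < m ->
     (\int[lebesgue_measure]_x `|qdens pX m x - qdens pY m x|
       <= \int[lebesgue_measure]_x `|(pX x)%:E - (pY x)%:E|)%E) /\
  (forall (alpha m : R), 0 < alpha -> 4 <= m ->
     (\int[lebesgue_measure]_x ((`|x| `^ alpha) * pX x)%:E < +oo)%E ->
     let EX := (\int[lebesgue_measure]_x ((`|x| `^ alpha) * pX x)%:E)%E in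
     let EXt := (\int[lebesgue_measure]_x ((`|x| `^ alpha)%:E * qdens pX m x))%E in
     let Pr := (\int[lebesgue_measure]_(x in [set x : R | (1 / Num.sqrt m < `|x|)%R])
                  (pX x)%:E)%E in
     (Pr * (expR (- (2 * alpha) / Num.sqrt m))%:E * EX <= EXt)%E /\
     (EXt <= ((2 / Num.sqrt m) `^ alpha)%:E + (expR (alpha / Num.sqrt m))%:E * EX)%E).
Proof.
move=> hX hY; split=> [m m0|alpha m a0 m4 EX_fin EX EXt Pr].
  exact: l1_qdens_le.
by split; [exact: moment_qdens_ge | exact: moment_qdens_le].
Qed.
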